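(* For every prime $p$ there exists a linear $(2,p,p)$-AONT, i.e. an invertible $p\times p$ matrix over $\mathbb{F}_p$ all of whose $2\times2$ submatrices are invertible.
   Context: A linear $(t,s,q)$-AONT over $\mathbb{F}_q$ is given by an invertible $s\times s$ matrix $M$ over $\mathbb{F}_q$ (the transform being $(y_1,\dots,y_s)=(x_1,\dots,x_s)M^{-1}$); $M$ defines a linear $(t,s,q)$-AONT iff every $t\times t$ submatrix of $M$ is invertible. *)

From mathcomp Require Import all_boot all_order all_algebra.
Set Implicit Arguments. Unset Strict Implicit. Unset Printing Implicit Defensive.
Import GRing.Theory.
Local Open Scope ring_scope.

(* A t x t submatrix of M : 'M_s is given by t distinct rows (injective f)
   and t distinct columns (injective g); we take it as mxsub f g M. *)
Definition all_submx_invertible (F : fieldType) (t s : nat) (M : 'M[F]_s) : Prop :=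
  forall (f g : 'I_t -> 'I_s), injective f -> injective g ->
    mxsub f g M \in unitmx.

Definition linear_AONT (F : fieldType) (t s : nat) (M : 'M[F]_s) : Prop :=
  M \in unitmx /\ all_submx_invertible t M.

From mathcomp Require Import all_boot all_order all_algebra finfield.
From mathcomp Require Import ring.
Set Implicit Arguments. Unset Strict Implicit. Unset Printing Implicit Defensive.
Import GRing.Theory.
Local Open Scope ring_scope.

(* Index rows and columns by the elements of F_p and take the entry 1/(xy - 1)
   (with 1/0 = 0), except that the (0,0) entry is shifted from -1 to 0.  A 2x2
   minor with rows a != b and columns c != d is nonzero because
   (ac - 1)(bd - 1) - (ad - 1)(bc - 1) = (b - a)(c - d); the shifted entry only
   occurs in minors that equal -1.
   For p odd, 1/z = z^(p-2) and 1 - x^(p-1) = [x = 0] on F_p, so the entry is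
   (xy - 1)^(p-2) + (x^(p-1) - 1)(y^(p-1) - 1).  Expanding the binomial writes the
   matrix as W^T D W, where W is a Vandermonde matrix up to a unipotent row
   operation and D is diagonal with entries +-C(p-2, j), which are units mod p.
   For p = 2 the matrix is its own 2x2 submatrix. *)

Lemma det_mx22 (R : comNzRingType) (A : 'M[R]_2) :
  \det A = A 0 0 * A 1 1 - A 0 1 * A 1 0.
Proof.
rewrite (expand_det_row _ 0) !big_ord_recl big_ord0 addr0 /cofactor !det_mx11.
rewrite !mxE /= expr0 mul1r expr1 mulN1r mulrN.
by congr (A _ _ * A _ _ - A _ _ * A _ _); apply: val_inj.
Qed.

Lemma expf_card_pred (F : finFieldType) (x : F) : x ^+ #|F|.-1 = (x != 0)%:R.
Proof.
have q_gt1 := card_finNzRing_gt1 F.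
have [->|x0] := eqVneq x 0; first by rewrite expr0n -(subnKC q_gt1).
by apply: (mulfI x0); rewrite -exprS prednK ?expf_card ?mulr1 // ltnW.
Qed.

Lemma invf_expf_card (F : finFieldType) (x : F) : (2 < #|F|)%N -> x^-1 = x ^+ #|F|.-2.
Proof.
move=> q_gt2; have [->|x0] := eqVneq x 0; first by rewrite invr0 expr0n -(subnKC q_gt2).
apply: (mulfI x0); rewrite mulfV // -exprS -subn2 subnSK ?subn1 ?expf_card_pred ?x0 //.
exact: ltnW.
Qed.

Definition aont_entry (F : fieldType) (x y : F) : F :=
  (x * y - 1)^-1 + ((x == 0) && (y == 0))%:R.

Lemma inv_mul_sub1_minor_neq0 (F : fieldType) (a b c d : F) : a != b -> c != d ->
  (a * c - 1)^-1 * (b * d - 1)^-1 - (a * d - 1)^-1 * (b * c - 1)^-1 != 0.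
Proof.
move=> ab cd; rewrite subr_eq0 -!invfM; apply/eqP => /invr_inj/eqP.
have -> : ((a * c - 1) * (b * d - 1) == (a * d - 1) * (b * c - 1))
        = ((b - a) * (c - d) == 0) by rewrite -subr_eq0; congr (_ == 0); ring.
by rewrite mulf_eq0 !subr_eq0 eq_sym (negPf ab) (negPf cd).
Qed.

Lemma aont_entry_minor_neq0 (F : fieldType) (a b c d : F) : a != b -> c != d ->
  aont_entry a c * aont_entry b d - aont_entry a d * aont_entry b c != 0.
Proof.
move=> ab cd; rewrite /aont_entry.
have [a0|a0] := eqVneq a 0; have [b0|b0] := eqVneq b 0;
  have [c0|c0] := eqVneq c 0; have [d0|d0] := eqVneq d 0;
  rewrite ?eqxx ?(negPf a0) ?(negPf b0) ?(negPf c0) ?(negPf d0) /= ?addr0.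
all: try exact: inv_mul_sub1_minor_neq0.
all: try by move: ab cd; rewrite ?a0 ?b0 ?c0 ?d0 eqxx.
all: by rewrite ?a0 ?b0 ?c0 ?d0 !(mul0r, mulr0, sub0r, invrN, invr1, addNr)
  ?mulrNN ?mulr1 ?mul0r ?subr0 ?oppr_eq0 oner_eq0.
Qed.

Lemma prime_ndvdn_fact p n : prime p -> (n < p)%N -> ~~ (p %| n`!)%N.
Proof.
move=> p_pr; elim: n => [|n IHn] n_lt_p; first by rewrite fact0 dvdn1 gtn_eqF ?prime_gt1.
rewrite factS Euclid_dvdM // negb_or IHn ?andbT ?(ltnW n_lt_p) //.
by apply: contraL n_lt_p => /(dvdn_leq (ltn0Sn n)); rewrite -leqNgt.
Qed.

Lemma natr_bin_Fp_neq0 p n m : prime p -> (n < p)%N -> (m <= n)%N ->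
  ('C(n, m)%:R : 'F_p) != 0.
Proof.
move=> p_pr n_lt_p m_le_n; rewrite -(dvdn_pcharf (pchar_Fp p_pr)).
apply: contraNN (prime_ndvdn_fact p_pr n_lt_p) => /(dvdn_mulr (m`! * (n - m)`!)).
by rewrite bin_fact.
Qed.

Lemma natr_Fp_inj p : prime p -> injective (fun i : 'I_p => (i : nat)%:R : 'F_p).
Proof.
move=> p_pr i j /(congr1 (@nat_of_ord _)); rewrite !val_Fp_nat // !modn_small //.
exact: val_inj.
Qed.

Lemma unitmx_tr_diag_mul (R : comUnitRingType) n (W : 'M[R]_n) (d : 'rV[R]_n) :
  W \in unitmx -> (forall j, d 0 j \is a GRing.unit) ->
  W^T *m diag_mx d *m W \in unitmx.
Proof.
move=> W_unit d_unit; rewrite !unitmx_mul unitmx_tr W_unit andbT /=.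
by rewrite unitmxE det_diag unitr_prod.
Qed.

Definition aont_mx p : 'M['F_p]_p := \matrix_(i, k) aont_entry (i : nat)%:R (k : nat)%:R.

Lemma aont_mx_submx_unit p : prime p -> all_submx_invertible 2 (aont_mx p).
Proof.
move=> p_pr f g f_inj g_inj; rewrite unitmxE unitfE det_mx22 !mxE.
by apply: aont_entry_minor_neq0; rewrite (inj_eq (natr_Fp_inj p_pr)) inj_eq.
Qed.

Section OddPrimeFactorization.
Variable n : nat.
Hypothesis p_pr : prime n.+2.
Hypothesis n_gt0 : (0 < n)%N.
Local Notation F := 'F_(n.+2).
Local Notation l := (@ord_max n.+1).
Local Notation x i := ((i : nat)%:R : F).

Definition aont_factor : 'M[F]_n.+2 := \matrix_(m, i) (x i ^+ m - (m == l)%:R).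

Definition aont_weight : 'rV[F]_n.+2 :=
  \row_m (if m == l then 1 else (-1) ^+ (n - m) *+ 'C(n, m)).

Lemma aont_entry_Fp (a b : F) :
  aont_entry a b = (a * b - 1) ^+ n + (a ^+ n.+1 - 1) * (b ^+ n.+1 - 1).
Proof.
have card_F : #|F| = n.+2 := card_Fp p_pr.
have fermat (c : F) : c ^+ n.+1 = (c != 0)%:R by rewrite -expf_card_pred card_F.
rewrite /aont_entry invf_expf_card card_F // !fermat.
by case: (a == 0); case: (b == 0); rewrite /= ?subrr ?mulr0 ?mul0r // sub0r mulrNN mulr1.
Qed.

Lemma aont_mx_factorization :
  aont_mx n.+2 = aont_factor^T *m diag_mx aont_weight *m aont_factor.
Proof.
apply/matrixP => i k; rewrite mul_mx_diag !mxE aont_entry_Fp [_ * _ - 1]addrC exprDn.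
rewrite [RHS]big_ord_recr /= !mxE !eqxx mulr1; congr (_ + _); apply: eq_bigr => j _.
have jl : (widen_ord (leqnSn n.+1) j == l) = false by rewrite -val_eqE /= ltn_eqF.
rewrite !mxE jl mulr0n !subr0 /= exprMn mulrnAr mulrnAl; congr (_ *+ _); ring.
Qed.

Lemma aont_factor_unit : aont_factor \in unitmx.
Proof.
pose V := Vandermonde n.+2 (\row_(i < n.+2) x i).
have -> : aont_factor = (1 - delta_mx l 0) *m V.
  apply/matrixP => m i; rewrite mulmxBl mul1mx !mxE (bigD1 ord0) //= big1 => [|j j0].
    by rewrite !mxE eqxx andbT expr0 mulr1 addr0.
  by rewrite mxE (negPf j0) andbF mul0r.
have T_inv : (1 - delta_mx l 0) *m (1 + delta_mx l 0) = 1%:M :> 'M[F]_n.+2.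
  by rewrite mulmxDr !mulmxBl !mulmx1 mul1mx mul_delta_mx_0 // subr0 subrK.
rewrite unitmx_mul (mulmx1_unit T_inv).1 unitmxE unitfE det_Vandermonde; apply/prodf_neq0 => i _; apply/prodf_neq0 => j ij.
rewrite !mxE subr_eq0 (inj_eq (natr_Fp_inj p_pr)); apply: contraTneq ij => ->.
by rewrite ltnn.
Qed.

Lemma aont_weight_unit m : aont_weight 0 m \is a GRing.unit.
Proof.
rewrite mxE unitfE; have [_|ml] := eqVneq m l; first exact: oner_neq0.
rewrite -mulr_natr mulf_neq0 ?signr_eq0 // natr_bin_Fp_neq0 //.
by rewrite -ltnS ltn_neqAle -val_eqE /= in ml *; rewrite ml -ltnS ltn_ord.
Qed.

End OddPrimeFactorization.

Lemma aont_mx_unit p : prime p -> aont_mx p \in unitmx.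
Proof.
case: p => [|[|[|n]]] p_pr; [by [] | by [] | |].
  by have := aont_mx_submx_unit p_pr (@inj_id _) (@inj_id _); rewrite mxsub_id.
rewrite (aont_mx_factorization p_pr) //.
by apply: unitmx_tr_diag_mul; [exact: aont_factor_unit | exact: aont_weight_unit].
Qed.

Theorem theorem2p12 (p : nat) (hp : prime p) :
  exists M : 'M['F_p]_p, linear_AONT 2 M.
Proof.
exists (aont_mx p); split; first exact: aont_mx_unit.
exact: aont_mx_submx_unit.
Qed.
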